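(* Let $w$ be an nTL-monomial for $P_n$ and let $x_i$ be a letter occurring in $w$. If $i$ is the $j$-th smallest among the distinct indices occurring in $w$, then $x_i$ occurs at most $j$ times in $w$; likewise, if $i$ is the $j$-th largest among the distinct indices occurring in $w$, then $x_i$ occurs at most $j$ times in $w$.
   Context: The nil-Temperley-Lieb algebra $A_n$ of the path graph $P_n$ is the unital associative algebra generated by $x_1,\dots,x_n$ subject to the relations $x_i^2=0$; $x_ix_j=x_jx_i$ if $|i-j|>1$; $x_ix_{i+1}x_i=0$ and $x_{i+1}x_ix_{i+1}=0$ for $1\le i<n$. Two words are equivalent if one can be obtained from the other by repeatedly swapping adjacent letters $x_ix_j\to x_jx_i$ with $|i-j|>1$. A word is reducible if it equals $0$ in $A_n$. An nTL-monomial is a word that is not reducible and lexicographically smallest (by index sequence) among all words equivalent to it. *)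

From mathcomp Require Import all_boot.
Set Implicit Arguments. Unset Strict Implicit. Unset Printing Implicit Defensive.

(* Words in x_1..x_n are represented by their index sequences (seq nat). *)

Definition word_on (n : nat) (w : seq nat) : bool :=
  all (fun i => (1 <= i <= n)%N) w.

Definition far (i j : nat) : bool := ((i.+1 < j) || (j.+1 < i))%N.

Inductive comm_step : seq nat -> seq nat -> Prop :=
| CommStep u v i j : far i j -> comm_step (u ++ [:: i; j] ++ v) (u ++ [:: j; i] ++ v).

(* equivalence of words: reflexive-transitive closure of commutations
   (comm_step is symmetric, so this is an equivalence relation) *)
Inductive word_equiv : seq nat -> seq nat -> Prop :=
| WE_refl w : word_equiv w w
| WE_step w1 w2 w3 : comm_step w1 w2 -> word_equiv w2 w3 -> word_equiv w1 w3.

Definition zero_relator (r : seq nat) : Prop :=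
  (exists i, r = [:: i; i]) \/
  (exists i, r = [:: i; i.+1; i]) \/
  (exists i, r = [:: i.+1; i; i.+1]).

(* All defining relations of A_n are monomial
   (w = 0) or binomial commutations (w = w'), so A_n is the contracted
   semigroup algebra of the monoid-with-zero with the same presentation and
   a word is 0 in A_n iff it is congruent to 0 in that monoid, i.e. iff it is
   obtained by commutations from a word containing a zero relator as a factor. *)
Definition reducible (w : seq nat) : Prop :=
  exists u r v, zero_relator r /\ word_equiv w (u ++ r ++ v).

Fixpoint lex_le (s t : seq nat) : bool :=
  match s, t with
  | [::], _ => true
  | _ :: _, [::] => false
  | a :: s', b :: t' => (a < b)%N || ((a == b) && lex_le s' t')
  end.

Definition nTL_monomial (n : nat) (w : seq nat) : Prop :=
  word_on n w /\ ~ reducible w /\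
  (forall w', word_equiv w w' -> lex_le w w').

Definition idx_support (w : seq nat) : seq nat := sort leq (undup w).

From mathcomp Require Import all_boot.
From mathcomp Require Import zify.

Set Implicit Arguments.
Unset Strict Implicit.
Unset Printing Implicit Defensive.

(* Between two consecutive occurrences of a letter i in a word that is not 0
   in A_n, both neighbours i-1 and i+1 occur: if at most one letter of the gap
   fails to commute with i, commuting the others away exposes x_i x_i or
   x_i x_(i+-1) x_i, and a neighbour d occurring twice in the gap would, by
   induction on the gap length, enclose an i.  Hence i occurs at most once
   more often than i-1 and than i+1, and iterating down to the smallest (or up
   to the largest) index bounds the multiplicity of i by its rank from below
   (or from above). *)

Lemma word_equiv_trans u v w : word_equiv u v -> word_equiv v w -> word_equiv u w.
Proof. by elim=> // x y z xy _ IH /IH; apply: WE_step. Qed.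

Lemma far_sym i j : far i j = far j i.
Proof. by rewrite /far orbC. Qed.

Lemma comm_step_sym u v : comm_step u v -> comm_step v u.
Proof. by case=> p q i j ij; apply: CommStep; rewrite far_sym. Qed.

Lemma word_equiv_sym u v : word_equiv u v -> word_equiv v u.
Proof.
elim=> [w|x y z xy _ zy]; first exact: WE_refl.
exact: word_equiv_trans zy (WE_step (comm_step_sym xy) (WE_refl x)).
Qed.

Lemma word_equiv_cat p q u v :
  word_equiv u v -> word_equiv (p ++ u ++ q) (p ++ v ++ q).
Proof.
elim=> [w|_ _ w [u' v' i j ij] _ IH]; first exact: WE_refl.
apply: WE_step IH; have := CommStep (p ++ u') (v' ++ q) ij.
by rewrite -!catA.
Qed.

Lemma word_equiv_commute x g : all (far x) g -> word_equiv (x :: g) (g ++ [:: x]).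
Proof.
elim: g => [_|y g IH] /=; first exact: WE_refl.
case/andP=> xy /IH xg; apply: (WE_step (CommStep [::] g xy)).
by have := word_equiv_cat [:: y] [::] xg; rewrite /= !cats0.
Qed.

Lemma reducible_word_equiv u v : word_equiv u v -> reducible v -> reducible u.
Proof.
move=> uv [p [r [q [r0 vr]]]]; exists p, r, q.
by split; last exact: word_equiv_trans vr.
Qed.

Lemma reducible_far_spread a g1 r g2 b i :
  all (far i) g1 -> all (far i) g2 -> zero_relator (i :: r ++ [:: i]) ->
  reducible (a ++ i :: g1 ++ r ++ g2 ++ i :: b).
Proof.
move=> g1i g2i r0.
apply: (@reducible_word_equiv _ ((a ++ g1) ++ (i :: r ++ [:: i]) ++ g2 ++ b)).
  apply: (@word_equiv_trans _ (a ++ (g1 ++ [:: i]) ++ r ++ g2 ++ i :: b)).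
    exact: word_equiv_cat (word_equiv_commute g1i).
  have := word_equiv_cat (a ++ g1 ++ i :: r) b (word_equiv_sym (word_equiv_commute g2i)).
  by rewrite -!catA /= -!catA.
by exists (a ++ g1), (i :: r ++ [:: i]), (g2 ++ b); split; last exact: WE_refl.
Qed.

Lemma zero_relator_not_far i d : d != i -> ~~ far i d -> zero_relator [:: i; d; i].
Proof.
rewrite /far => di nf; right; have [->|dSi] := eqVneq d i.+1; first by left; exists i.
by right; exists d; have -> : i = d.+1 by lia.
Qed.

Lemma count_not_far i g : i \notin g ->
  count (predC (far i)) g = count_mem i.-1 g + count_mem i.+1 g.
Proof.
elim: g => //= x g IH; rewrite inE negb_or => /andP[xi /IH ->].
by rewrite /far; lia.
Qed.

Lemma split_count1 (T : Type) (p : pred T) s : count p s = 1 ->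
  exists s1 x s2, [/\ s = s1 ++ x :: s2, p x, ~~ has p s1 & ~~ has p s2].
Proof.
move=> ps1; have ps : has p s by rewrite has_count ps1.
case/split_find: ps ps1 => x s1 s2 px s1p; rewrite cat_rcons count_cat /= px => ps1.
exists s1, x, s2; split=> //.
by move: s1p; rewrite !has_count; lia.
Qed.

Lemma split_first_two (T : eqType) (x : T) s : 1 < count_mem x s ->
  exists a g b, [/\ s = a ++ x :: g ++ x :: b, x \notin a & x \notin g].
Proof.
have first_occ t : x \in t -> exists t1 t2, t = t1 ++ x :: t2 /\ x \notin t1.
  rewrite -has_pred1 => /split_find[y t1 t2 /eqP-> t1x].
  by exists t1, t2; rewrite cat_rcons -has_pred1.
move=> sx; have /first_occ[a [t [def_s xa]]] : x \in s by rewrite -has_pred1 has_count ltnW.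
have /first_occ[g [b [def_t xg]]] : x \in t.
  move: sx; rewrite -has_pred1 has_count def_s count_cat /= eqxx.
  by move/count_memPn: xa => ->.
by exists a, g, b; rewrite def_s def_t.
Qed.

Lemma reducible_few_not_far a g b i : i \notin g -> count (predC (far i)) g <= 1 ->
  reducible (a ++ i :: g ++ i :: b).
Proof.
move=> ig c1; have [c0 | c_pos] := posnP (count (predC (far i)) g).
  have gi : all (far i) g by rewrite -[all _ _]negbK -has_predC has_count c0.
  have ii : zero_relator [:: i; i] by left; exists i.
  by have := @reducible_far_spread a g [::] [::] b i gi isT ii.
have [g1 [d [g2 [def_g dnf g1i g2i]]]] : exists g1 d g2,
    [/\ g = g1 ++ d :: g2, ~~ far i d, ~~ has (predC (far i)) g1
      & ~~ has (predC (far i)) g2].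
  by apply: split_count1; apply/eqP; rewrite eqn_leq c1.
rewrite def_g -catA; apply: (@reducible_far_spread a g1 [:: d]).
- by rewrite has_predC negbK in g1i.
- by rewrite has_predC negbK in g2i.
apply: zero_relator_not_far dnf; apply: contraNneq ig => <-.
by rewrite def_g mem_cat inE eqxx orbT.
Qed.

(* For i = 0 we have i.-1 = i, so the conclusion says that 0 never occurs twice. *)
Lemma neighbours_between a g b i : i \notin g ->
  ~ reducible (a ++ i :: g ++ i :: b) -> (i.-1 \in g) && (i.+1 \in g).
Proof.
have [m] := ubnP (size g); elim: m a g b i => // m IH a g b i /ltnSE gm ig irr.
have at_most_once d : d \in [:: i.-1; i.+1] -> count_mem d g <= 1.
  move=> di; rewrite leqNgt; apply/negP.
  case/split_first_two=> [g1 [h [g2 [def_g _ dh]]]].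
  have hm : size h < m by move: gm; rewrite def_g !size_cat /= size_cat; lia.
  have irr_h : ~ reducible ((a ++ i :: g1) ++ d :: h ++ d :: g2 ++ i :: b).
    by move: irr; rewrite def_g -!catA /= -!catA.
  have /andP[hd1 hd2] := IH _ _ _ _ hm dh irr_h.
  have ih : i \in h.
    have d_neq_i : d != i.
      by apply: contraNneq ig => <-; rewrite def_g mem_cat inE eqxx orbT.
    move: di; rewrite !inE => /orP[] /eqP d_eq; last by rewrite d_eq in hd1.
    by have <- : d.+1 = i by lia.
  by move: ig; rewrite def_g mem_cat inE mem_cat ih !orbT.
have c_pred : count_mem i.-1 g <= 1.
  case: (eqVneq i.-1 i) => [-> | _]; last by apply: at_most_once; rewrite inE eqxx.
  by move/count_memPn: ig => ->.
have c_succ : count_mem i.+1 g <= 1 by apply: at_most_once; rewrite !inE eqxx orbT.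
have c_near : 1 < count (predC (far i)) g.
  by rewrite ltnNge; apply/negP => c1; exact: irr (reducible_few_not_far a b ig c1).
move: c_near; rewrite count_not_far // -!has_pred1 !has_count; lia.
Qed.

Definition separated_by (f : nat -> nat) (s : seq nat) : Prop :=
  forall a g b i, s = a ++ i :: g ++ i :: b -> i \notin g -> f i \in g.

Lemma irreducible_separated w :
  ~ reducible w -> separated_by predn w /\ separated_by succn w.
Proof.
by move=> irr; split=> a g b i def_w ig; rewrite def_w in irr;
  case/andP: (neighbours_between ig irr).
Qed.

Lemma count_mem_le_between (T : eqType) (p : pred T) x s : ~~ p x ->
  (forall a g b, s = a ++ x :: g ++ x :: b -> x \notin g -> has p g) ->
  count_mem x s <= count p s + 1.
Proof.
move=> npx; have [m] := ubnP (size s); elim: m s => // m IH s /ltnSE sm gaps.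
have [c1 | /split_first_two[a [g [b [def_s xa xg]]]]] := leqP (count_mem x s) 1.
  exact: leq_trans c1 (leq_addl _ _).
have pg : 0 < count p g by rewrite -has_count; apply: gaps def_s xg.
have IHb : count_mem x (x :: b) <= count p (x :: b) + 1.
  apply: IH => [|a' g' b' def_b].
    by move: sm; rewrite def_s size_cat /= size_cat /=; lia.
  by apply: (gaps (a ++ x :: g ++ a')); rewrite def_s def_b -!catA /= -!catA.
move: IHb; rewrite def_s !count_cat /= !count_cat /= (negbTE npx) eqxx.
by move/count_memPn: xa => ->; move/count_memPn: xg => ->; lia.
Qed.

Lemma count_predU1 (T : eqType) (p q : pred T) x s :
  p =1 predU (pred1 x) q -> ~~ q x -> count p s = count q s + count_mem x s.
Proof.
move=> def_p qx; elim: s => //= y s ->; rewrite def_p /=.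
by case: eqVneq => [-> | _]; rewrite ?(negbTE qx) /=; lia.
Qed.

Lemma count_mem_le_rank_below s : separated_by predn s ->
  forall i, count_mem i s <= count (fun x => x <= i) (undup s).
Proof.
move=> gaps; elim=> [|i IH].
  have: count_mem 0 s <= count pred0 s + 1.
    apply: count_mem_le_between => // a g b /gaps sep g0.
    by move: (sep g0); rewrite /= (negbTE g0).
  rewrite count_pred0; case: (boolP (0 \in s)) => [s0 | /count_memPn -> //].
  by move/leq_trans; apply; rewrite -has_count; apply/hasP; exists 0; rewrite ?mem_undup.
case: (boolP (i.+1 \in s)) => [si | /count_memPn -> //].
have step : count_mem i.+1 s <= count_mem i s + 1.
  apply: count_mem_le_between => [|a g b /gaps]; last by rewrite has_pred1.
  by rewrite /= eq_sym neq_ltn ltnSn.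
rewrite (@count_predU1 _ _ (fun x => x <= i) i.+1 (undup s)) => [|x|]; last 2 first.
- by rewrite /= leq_eqVlt ltnS.
- by rewrite /= ltnn.
rewrite (count_uniq_mem _ (undup_uniq s)) mem_undup si.
exact: leq_trans step (leq_add IH _).
Qed.

Lemma count_mem_le_rank_above s : separated_by succn s ->
  forall i, count_mem i s <= count (leq i) (undup s).
Proof.
move=> gaps i; have [m] := ubnP (count (leq i) (undup s)); elim: m i => // m IH i cm.
case: (boolP (i \in s)) => [si | /count_memPn -> //].
have step : count_mem i s <= count_mem i.+1 s + 1.
  apply: count_mem_le_between => [|a g b /gaps]; last by rewrite has_pred1.
  by rewrite /= neq_ltn ltnSn.
have rank_succ : count (leq i) (undup s) = count (leq i.+1) (undup s) + 1.
  rewrite (@count_predU1 _ _ (leq i.+1) i (undup s)) => [|x|]; last 2 first.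
  - by rewrite /= leq_eqVlt eq_sym.
  - by rewrite /= ltnn.
  by rewrite (count_uniq_mem _ (undup_uniq s)) mem_undup si.
have IHsucc : count_mem i.+1 s <= count (leq i.+1) (undup s).
  by apply: IH; move: cm; rewrite rank_succ addn1 ltnS.
by rewrite rank_succ; apply: leq_trans step (leq_add IHsucc _).
Qed.

Lemma sorted_count_not_after_nth (T : Type) (r : rel T) x0 s k :
  transitive r -> sorted r s -> count (fun y => ~~ r (nth x0 s k) y) s <= k.+1.
Proof.
move=> r_trans s_sorted; set x := nth x0 s k.
have [ks | sk] := ltnP k (size s); last exact: leq_trans (count_size _ _) (leqW sk).
have def_drop : drop k s = x :: drop k.+1 s by apply: drop_nth.
have after_x : all (r x) (drop k.+1 s).
  by apply: order_path_min r_trans _; have := drop_sorted k s_sorted; rewrite def_drop.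
rewrite -[s in count _ s](cat_take_drop k) def_drop count_cat /=.
have -> : count (fun y => ~~ r x y) (drop k.+1 s) = 0.
  apply/eqP; rewrite -leqn0 leqNgt -has_count -all_predC.
  by apply: sub_all after_x => y /= ->.
have := count_size (fun y => ~~ r x y) (take k s); rewrite size_takel ?(ltnW ks) //.
by case: (~~ r x x); lia.
Qed.

Theorem lemma7p1 (n : nat) (w : seq nat) (i j : nat) :
  nTL_monomial n w -> i \in w -> (1 <= j)%N ->
  (nth 0 (idx_support w) j.-1 = i -> (count_mem i w <= j)%N) /\
  (nth 0 (rev (idx_support w)) j.-1 = i -> (count_mem i w <= j)%N).
Proof.
move=> [_ [irr _]] _ j_gt0; set s := idx_support w.
have [below above] := irreducible_separated irr.
have s_sorted : sorted ltn s.
  by rewrite ltn_sorted_uniq_leq sort_uniq undup_uniq sort_sorted //; apply: leq_total.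
have count_support : forall p, count p (undup w) = count p s.
  by apply/permP; rewrite perm_sym perm_sort.
rewrite -(prednK j_gt0); split=> <-.
- apply: leq_trans (count_mem_le_rank_below below _) _.
  rewrite count_support; under eq_count do rewrite leqNgt.
  exact: sorted_count_not_after_nth ltn_trans s_sorted.
- apply: leq_trans (count_mem_le_rank_above above _) _.
  rewrite count_support -count_rev; under eq_count do rewrite leqNgt.
  apply: (sorted_count_not_after_nth (r := gtn)); last by rewrite rev_sorted.
  by move=> y x z xy yz; apply: ltn_trans yz xy.
Qed.
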